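(* Let $(P,\mathit{dist})$ be a finite metric space of doubling dimension $d$, let $\delta$ be the closest-pair distance of $P$, let $S\subseteq P$ with $n=|S|\ge 2$, and let $\delta_0$ be the output of Algorithm $\mathrm{ClosestPair}(S,n,d)$ (for any outcome of its random choices). Then (1) $\delta_0\ge\delta$, and (2) if $\delta(S)=\delta$, then $\delta_0=\delta$.
   Context: For $X\subseteq P$, $p\in P$ and reals $R'\ge R\ge 0$: $\mathit{ball}_X(p,R)=\{x\in X:\mathit{dist}(p,x)\le R\}$ and $\mathit{annulus}_X(p,R,R')=\{x\in X: R<\mathit{dist}(p,x)\le R'\}$. For $X\subseteq P$, $\delta(X)=\infty$ if $|X|\le1$ and $\delta(X)=\min\{\mathit{dist}(x,y):x,y\in X,x\ne y\}$ otherwise; $\delta=\delta(P)$. The doubling dimension of $(P,\mathit{dist})$ is $\log_2\lambda$, where $\lambda$ is the smallest integer such that for every $p\in P$ and real $R>0$, $\mathit{ball}_P(p,R)$ is covered by at most $\lambda$ balls $\mathit{ball}_P(q,R/2)$ with $q\in P$; throughout, $d$ denotes the doubling dimension of the whole space $P$. Algorithm $\mathrm{SepAnn}(S,n,d,\mu,c)$: repeat: choose $p$ uniformly at random from $S$; let $R_p=\min\{r>0:|\mathit{ball}_S(p,r)|\ge n/c\}$; until $|\mathit{ball}_S(p,\mu R_p)|\le n/2$; return $p$ and $R'=R_p$. Algorithm $\mathrm{SparseSepAnn}(S,n,d,t)$: set $c=2(4e)^d$; let $(p,R')$ be the output of $\mathrm{SepAnn}(S,n,d,e,c)$; let $R_i=(1+1/t)^iR'$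 ($0\le i\le t$) and $A_i=\mathit{annulus}_S(p,R_{i-1},R_i)$ ($1\le i\le t$); repeat: choose $i$ uniformly at random from $\{1,\dots,t\}$; until $|A_i|\le n/t$; return $p$ and $R=R_{i-1}$. Algorithm $\mathrm{ClosestPair}(S,n,d)$ (for $S\subseteq P$, $n=|S|\ge2$): if $n<2(16e)^d$, compute $\delta_0=\delta(S)$ by brute force. Otherwise: set $t=\lfloor \frac{1}{16e}(n/2)^{1/d}\rfloor$; let $(p,R)$ be the output of $\mathrm{SparseSepAnn}(S,n,d,t)$; let $S_1=\mathit{ball}_S(p,R)$, $S_2=\mathit{annulus}_S(p,R,(1+1/t)R)$, $S_3=S\setminus(S_1\cup S_2)$; compute $\delta'=\mathrm{ClosestPair}(S_1\cup S_2,|S_1\cup S_2|,d)$ and $\delta''=\mathrm{ClosestPair}(S_2\cup S_3,|S_2\cup S_3|,d)$; set $\delta_0=\min(\delta',\delta'')$. Return $\delta_0$. *)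

From Stdlib Require Import Reals.
From Coquelicot Require Import Rbar.
From mathcomp Require Import all_boot.

Set Implicit Arguments.
Unset Strict Implicit.
Unset Printing Implicit Defensive.

Local Open Scope R_scope.

Section FiniteMetric.
Variable T : finType.          (* the finite point set P is the whole of T *)
Variable dist : T -> T -> R.

Definition is_metric : Prop :=
  (forall x y, dist x y = 0 <-> x = y) /\
  (forall x y, dist x y = dist y x) /\
  (forall x y z, (dist x z <= dist x y + dist y z)).

Definition Rleb (x y : R) : bool := if Rle_dec x y then true else false.
Definition Rltb (x y : R) : bool := if Rlt_dec x y then true else false.

Definition ball (X : {set T}) (p : T) (r : R) : {set T} :=
  [set x in X | Rleb (dist p x) r].
Definition annulus (X : {set T}) (p : T) (r r' : R) : {set T} :=
  [set x in X | Rltb r (dist p x) && Rleb (dist p x) r'].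

Definition delta (X : {set T}) : Rbar :=
  foldr (fun xy acc => Rbar_min (Rbar.Finite (dist xy.1 xy.2)) acc) p_infty
    [seq xy <- [seq (x, y) | x <- enum X, y <- enum X] | xy.1 != xy.2].

Definition doubling_cover (lam : nat) : Prop :=
  forall (p : T) (r : R), (0 < r) ->
    exists Q : {set T}, (#|Q| <= lam)%N /\
      ball setT p r \subset \bigcup_(q in Q) ball setT q (r / 2).

Definition doubling_constant (lam : nat) : Prop :=
  doubling_cover lam /\ forall lam', doubling_cover lam' -> (lam <= lam')%N.

Definition doubling_dimension (d : R) : Prop :=
  exists lam, doubling_constant lam /\ d = (ln (INR lam) / ln 2).

Definition is_min_radius (S : {set T}) (p : T) (k : R) (r : R) : Prop :=
  (0 < r) /\ (k <= INR #|ball S p r|) /\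
  forall r', (0 < r') -> (k <= INR #|ball S p r'|) -> (r <= r').

(* possible outputs (p, R') of SepAnn(S,n,d,mu,c), over all outcomes of the
   random choices (a repeat-until loop returns exactly an element satisfying
   the exit test) *)
Definition SepAnn_out (S : {set T}) (n : nat) (mu c : R) (p : T) (R' : R) : Prop :=
  p \in S /\ is_min_radius S p (INR n / c) R' /\
  (INR #|ball S p (mu * R')| <= INR n / 2).

Definition SparseSepAnn_out (d : R) (S : {set T}) (n t : nat) (p : T) (R0 : R) : Prop :=
  let c := (2 * Rpower (4 * exp 1) d) in
  exists R', SepAnn_out S n (exp 1) c p R' /\
  let Ri := fun i : nat => ((1 + / INR t) ^ i * R') in
  exists i : nat, (1 <= i <= t)%N /\
    (INR #|annulus S p (Ri i.-1) (Ri i)| <= INR n / INR t) /\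
    R0 = Ri i.-1.

(* ClosestPair_out d S delta0 : delta0 is a possible output of ClosestPair(S,|S|,d)
   (over all outcomes of the random choices, for terminating runs) *)
Inductive ClosestPair_out (d : R) : {set T} -> Rbar -> Prop :=
| CP_brute (S : {set T}) :
    (INR #|S| < 2 * Rpower (16 * exp 1) d) ->
    ClosestPair_out d S (delta S)
| CP_rec (S : {set T}) (t : nat) (p : T) (R0 : R) (d1 d2 : Rbar) :
    ~ (INR #|S| < 2 * Rpower (16 * exp 1) d) ->
    (INR t <= / (16 * exp 1) * Rpower (INR #|S| / 2) (/ d) < INR t + 1) ->
    SparseSepAnn_out d S #|S| t p R0 ->
    ClosestPair_out d (ball S p R0 :|: annulus S p R0 ((1 + / INR t) * R0)) d1 ->
    ClosestPair_out d (annulus S p R0 ((1 + / INR t) * R0) :|: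
                       (S :\: (ball S p R0 :|: annulus S p R0 ((1 + / INR t) * R0)))) d2 ->
    ClosestPair_out d S (Rbar_min d1 d2).

End FiniteMetric.

From Stdlib Require Import Reals Lra.
From Coquelicot Require Import Rbar.
From mathcomp Require Import all_boot.
Set Implicit Arguments.
Unset Strict Implicit.
Local Open Scope R_scope.

(* Every recursive call works on a subset of S, so its output is at least
   delta(S) >= delta.  For the equality, the only pairs of S separated by the
   recursion have one point in ball(p, R) and the other outside
   ball(p, (1 + 1/t) R), hence are more than R/t apart; so it suffices that
   t * delta <= R' <= R.  This is a packing argument: ball(p, R') contains at
   least n/c >= (4t)^d points, pairwise at distance >= delta, whereas by the
   doubling property a delta-separated set in a ball of radius r < t * delta
   has at most lambda^k = (2^k)^d < (4t)^d points, for 2^k ~ 2r/delta. *)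

Lemma RlebP (x y : R) : reflect (x <= y) (Rleb x y).
Proof. by rewrite /Rleb; case: Rle_dec => H; constructor. Qed.

Lemma RltbP (x y : R) : reflect (x < y) (Rltb x y).
Proof. by rewrite /Rltb; case: Rlt_dec => H; constructor. Qed.

Lemma Rbar_min_eq (m a b : Rbar) :
  Rbar_le m a -> Rbar_le m b -> a = m \/ b = m -> Rbar_min a b = m.
Proof.
move=> ma mb [am|bm]; apply: (@Rbar_min_case_strong a b (fun z => z = m)) => //.
- by move=> ba; apply: Rbar_le_antisym => //; rewrite -am.
- by move=> ab; apply: Rbar_le_antisym => //; rewrite -bm.
Qed.

Lemma foldr_Rbar_min_le (A : eqType) (f : A -> R) (l : seq A) a :
  a \in l -> Rbar_le (foldr (fun b m => Rbar_min (f b) m) p_infty l) (f a).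
Proof.
elim: l => [//|b l IH]; rewrite in_cons => /orP[/eqP ->|la].
  exact: Rbar_min_l.
exact: Rbar_le_trans (Rbar_min_r _ _) (IH la).
Qed.

Lemma foldr_Rbar_min_attained (A : eqType) (f : A -> R) (l : seq A) :
  foldr (fun b m => Rbar_min (f b) m) p_infty l = p_infty \/
  exists2 a, a \in l & foldr (fun b m => Rbar_min (f b) m) p_infty l = f a.
Proof.
elim: l => [|b l IH]; first by left.
move: IH; set m := foldr _ p_infty l => IH.
have -> : foldr (fun b m => Rbar_min (f b) m) p_infty (b :: l) = Rbar_min (f b) m by [].
apply: (@Rbar_min_case _ _ (fun z => z = p_infty \/ exists2 a, a \in b :: l & z = f a)).
  by right; exists b; rewrite ?mem_head.
case: IH => [->|[a la ->]]; first by left.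
by right; exists a; rewrite // in_cons la orbT.
Qed.

Section ClosestDistance.
Variables (T : finType) (dist : T -> T -> R).

Lemma delta_le_dist (X : {set T}) x y :
  x \in X -> y \in X -> x != y -> Rbar_le (delta dist X) (dist x y).
Proof.
move=> Xx Xy xy; apply: (@foldr_Rbar_min_le _ (fun xy => dist xy.1 xy.2) _ (x, y)).
by rewrite mem_filter xy; apply: allpairs_f; rewrite mem_enum.
Qed.

Lemma delta_attained (X : {set T}) :
  delta dist X = p_infty \/
  exists x y, [/\ x \in X, y \in X, x != y & delta dist X = dist x y].
Proof.
rewrite /delta.
case: (foldr_Rbar_min_attained (fun xy => dist xy.1 xy.2)
  [seq xy <- [seq (x, y) | x <- enum X, y <- enum X] | xy.1 != xy.2]) => [->|[xy]];
  first by left.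
rewrite mem_filter => /andP[xy_neq /allpairsP[[x y] [/= Xx Xy exy]]] ->.
subst xy; rewrite !mem_enum in Xx Xy.
by right; exists x, y; split.
Qed.

Lemma delta_le_subset (X Y : {set T}) :
  X \subset Y -> Rbar_le (delta dist Y) (delta dist X).
Proof.
move=> /subsetP XY; case: (delta_attained X) => [->|[x [y [Xx Xy xy ->]]]].
  by case: (delta dist Y).
by apply: delta_le_dist => //; apply: XY.
Qed.

Lemma delta_pair_eq (A : {set T}) x y :
  x \in A -> y \in A -> x != y -> delta dist [set: T] = dist x y ->
  delta dist A = delta dist [set: T].
Proof.
move=> Ax Ay xy Exy; apply: Rbar_le_antisym; last exact/delta_le_subset/subsetT.
by rewrite Exy; apply: delta_le_dist.
Qed.

Lemma ClosestPair_parts_subset (S : {set T}) p r r' :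
  ball dist S p r :|: annulus dist S p r r' \subset S /\
  annulus dist S p r r' :|: (S :\: (ball dist S p r :|: annulus dist S p r r')) \subset S.
Proof.
by split; apply/subsetP => x; rewrite !inE => /orP[]/andP[].
Qed.

Lemma ClosestPair_out_ge (d : R) (S : {set T}) (delta0 : Rbar) :
  ClosestPair_out dist d S delta0 -> Rbar_le (delta dist S) delta0.
Proof.
elim=> {S delta0} [S _ | S t p R0 d1 d2 _ _ _ _ le1 _ le2]; first exact: Rbar_le_refl.
have [sub1 sub2] := ClosestPair_parts_subset S p R0 ((1 + / INR t) * R0).
apply: (@Rbar_min_case d1 d2 (Rbar_le (delta dist S))).
  exact: Rbar_le_trans (delta_le_subset sub1) le1.
exact: Rbar_le_trans (delta_le_subset sub2) le2.
Qed.

End ClosestDistance.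

Lemma card_le_size_cover (T : finType) (P : rel T) (s : seq T) (A : {set T}) :
  {in A, forall a, exists2 q, q \in s & P q a} ->
  (forall q, {in A &, forall a b, P q a -> P q b -> a = b}) ->
  (#|A| <= size s)%N.
Proof.
move=> covered sepP.
pose f a := if [pick q in s | P q a] is Some q then q else a.
have fP a : a \in A -> f a \in s /\ P (f a) a.
  move=> Aa; rewrite /f; case: pickP => [q /andP[]//|none].
  by case: (covered a Aa) => q sq Pqa; move: (none q); rewrite sq Pqa.
have f_inj : {in A &, injective f}.
  move=> a b Aa Ab fab; have [_ Pa] := fP a Aa; have [_ Pb] := fP b Ab.
  by rewrite fab in Pa; apply: sepP Pa Pb.
rewrite -(card_in_imset f_inj); apply: leq_trans (card_size s).
by apply/subset_leq_card/subsetP => _ /imsetP[a Aa ->]; have [] := fP a Aa.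
Qed.

Lemma cover_compose (T : finType) (dist : T -> T -> R) (r r' : R) (M : nat) :
  (forall p, exists s : seq T, (size s <= M)%N /\
     forall x, dist p x <= r -> exists2 q, q \in s & dist q x <= r') ->
  forall s1 : seq T, exists s : seq T, (size s <= size s1 * M)%N /\
     forall x, (exists2 p, p \in s1 & dist p x <= r) -> exists2 q, q \in s & dist q x <= r'.
Proof.
move=> cover1; elim=> [|p s1 [s [size_s cover_s]]]; first by exists [::]; split => // x [].
have [sp [size_sp cover_sp]] := cover1 p.
exists (sp ++ s); split; first by rewrite size_cat mulSn leq_add.
move=> x [p']; rewrite in_cons => /orP[/eqP -> px | s1p' p'x].
  by have [q spq qx] := cover_sp x px; exists q; rewrite ?mem_cat ?spq.
have [q sq qx] := cover_s x (ex_intro2 _ _ p' s1p' p'x).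
by exists q; rewrite ?mem_cat ?sq ?orbT.
Qed.

Lemma INR_expn (m k : nat) : INR (m ^ k) = INR m ^ k.
Proof. by elim: k => [|k IH]; rewrite ?expn0 // expnS -multE mult_INR IH. Qed.

Lemma exists_pow2_gt (z : R) : exists k, z < 2 ^ k /\ 2 ^ k <= Rmax 1 (2 * z).
Proof.
have [N /(_ N (le_n N))] := Pow_x_infinity 2 ltac:(rewrite Rabs_pos_eq; lra) (z + 1).
rewrite Rabs_pos_eq => [zN|]; last by apply: pow_le; lra.
have {zN} : z < 2 ^ N by lra.
elim: N => [|N IH] zN; first by exists 0%N; split; [|apply: Rmax_l].
case: (Rlt_or_le z (2 ^ N)) => [/IH//|Nz].
by exists N.+1; split; [lra | apply: Rle_trans (Rmax_r 1 _); rewrite /=; lra].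
Qed.

Section ClosestPairParameter.
Variables (d : R) (n t : nat).
Hypothesis d_gt0 : 0 < d.
Hypothesis n_large : 2 * Rpower (16 * exp 1) d <= INR n.
Hypothesis t_floor : INR t <= / (16 * exp 1) * Rpower (INR n / 2) (/ d) < INR t + 1.

Let e_gt0 : 0 < exp 1 := exp_pos 1.

Lemma closest_pair_t_ge1 : (1 <= t)%N.
Proof.
have : 16 * exp 1 <= Rpower (INR n / 2) (/ d).
  have -> : 16 * exp 1 = Rpower (Rpower (16 * exp 1) d) (/ d).
    by rewrite Rpower_mult Rinv_r ?Rpower_1; lra.
  apply: Rle_Rpower_l; first by left; apply: Rinv_0_lt_compat.
  by split; [exact: exp_pos | lra].
move=> bound; apply/ltP/INR_lt => /=.
suff : 1 <= / (16 * exp 1) * Rpower (INR n / 2) (/ d) by lra.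
apply/(Rmult_le_reg_l (16 * exp 1)); first lra.
by rewrite -Rmult_assoc Rinv_r ?Rmult_1_l; lra.
Qed.

Lemma closest_pair_Rpower_4t_le :
  Rpower (4 * INR t) d <= INR n / (2 * Rpower (4 * exp 1) d).
Proof.
have t_ge1 : 1 <= INR t by apply: (le_INR 1); apply/leP; exact: closest_pair_t_ge1.
have n_pos : 0 < INR n / 2.
  have : 0 < Rpower (16 * exp 1) d by exact: exp_pos.
  lra.
have : Rpower (16 * exp 1 * INR t) d <= INR n / 2.
  have -> : INR n / 2 = Rpower (Rpower (INR n / 2) (/ d)) d.
    by rewrite Rpower_mult Rinv_l ?Rpower_1; lra.
  apply: Rle_Rpower_l; first lra.
  split; first nra.
  apply/(Rmult_le_reg_l (/ (16 * exp 1))); first by apply: Rinv_0_lt_compat; lra.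
  by rewrite -Rmult_assoc Rinv_l ?Rmult_1_l; lra.
have -> : 16 * exp 1 * INR t = 4 * exp 1 * (4 * INR t) by ring.
rewrite -Rpower_mult_distr; try lra.
move=> le; have pos : 0 < Rpower (4 * exp 1) d by exact: exp_pos.
apply/(Rmult_le_reg_l (Rpower (4 * exp 1) d)) => //.
by rewrite /Rdiv Rinv_mult; field_simplify; lra.
Qed.

End ClosestPairParameter.

Section Metric.
Variables (T : finType) (dist : T -> T -> R).
Hypothesis metric : is_metric dist.

Lemma dist_xx x : dist x x = 0.
Proof. by apply/(proj1 metric). Qed.

Lemma dist_sym x y : dist x y = dist y x.
Proof. by case: metric => _ []. Qed.

Lemma dist_triangle x y z : dist x z <= dist x y + dist y z.
Proof. by case: metric => _ []. Qed.

Lemma dist_gt0 x y : x <> y -> 0 < dist x y.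
Proof.
move=> xy; have := dist_triangle x y x; rewrite dist_xx (dist_sym y x) => ge0.
have : dist x y <> 0 by move/(proj1 metric).
lra.
Qed.

Lemma ball_setU_annulus (X : {set T}) p r r' :
  r <= r' -> ball dist X p r :|: annulus dist X p r r' = ball dist X p r'.
Proof.
move=> rr'; apply/setP => x; rewrite !inE; case: (x \in X) => //=.
by case: RlebP => ?; case: RltbP => ?; case: RlebP => ? //=; lra.
Qed.

Lemma annulus_setU_outside (X : {set T}) p r r' :
  annulus dist X p r r' :|: (X :\: (ball dist X p r :|: annulus dist X p r r')) =
  X :\: ball dist X p r.
Proof.
apply/setP => x; rewrite !inE; case: (x \in X) => //=; rewrite !andbT.
by case: RltbP => ?; case: RlebP => ?; case: RlebP => ? //=; lra.
Qed.

Lemma ball_or_outside_pair (X : {set T}) p r r' x y :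
  x \in X -> y \in X -> dist x y <= r' - r ->
  (x \in ball dist X p r' /\ y \in ball dist X p r') \/
  (x \in X :\: ball dist X p r /\ y \in X :\: ball dist X p r).
Proof.
move=> Xx Xy xy; rewrite !inE Xx Xy /=.
have := dist_triangle p x y; have := dist_triangle p y x; rewrite (dist_sym y x).
case: (RlebP (dist p x) r) => px; case: (RlebP (dist p y) r) => py /= ? ?;
  [left | left | left | by right].
all: by split; apply/RlebP; lra.
Qed.

Section Doubling.
Variable lam : nat.
Hypothesis cover : doubling_cover dist lam.

Lemma doubling_cover_seq p r : 0 < r ->
  exists s : seq T, (size s <= lam)%N /\
    forall x, dist p x <= r -> exists2 q, q \in s & dist q x <= r / 2.
Proof.
move=> r_gt0; have [Q [card_Q ballQ]] := cover p r_gt0.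
exists (enum Q); split; first by rewrite -cardE.
move=> x px; have : x \in ball dist setT p r by rewrite /ball !inE; apply/RlebP.
move/(subsetP ballQ)/bigcupP => [q Qq]; rewrite /ball !inE => /RlebP qx.
by exists q; rewrite ?mem_enum.
Qed.

Lemma doubling_cover_iter k p r : 0 < r ->
  exists s : seq T, (size s <= lam ^ k)%N /\
    forall x, dist p x <= r -> exists2 q, q \in s & dist q x <= r / 2 ^ k.
Proof.
elim: k p r => [|k IH] p r r_gt0.
  exists [:: p]; split; first by rewrite expn0.
  by move=> x px; exists p; rewrite ?mem_head //= Rdiv_1_r.
have [s1 [size_s1 cover_s1]] := doubling_cover_seq p r_gt0.
have r2_gt0 : 0 < r / 2 by lra.
have [s [size_s cover_s]] :=
  cover_compose (fun q => IH q (r / 2) r2_gt0) s1.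
exists s; split; first by rewrite expnS (leq_trans size_s) // leq_mul2r size_s1 orbT.
move=> x /cover_s1 /cover_s [q sq qx]; exists q => //.
by rewrite /= Rdiv_mult_distr.
Qed.

Lemma card_separated_le k p r del (A : {set T}) :
  0 < r -> {in A, forall a, dist p a <= r} ->
  {in A &, forall a b, a <> b -> del <= dist a b} ->
  r / 2 ^ k < del / 2 -> (#|A| <= lam ^ k)%N.
Proof.
move=> r_gt0 A_ball A_sep rk_lt.
have [s [size_s cover_s]] := doubling_cover_iter k p r_gt0.
apply: leq_trans size_s.
apply: (@card_le_size_cover _ (fun q a => Rleb (dist q a) (r / 2 ^ k))).
  by move=> a Aa; have [q sq qa] := cover_s a (A_ball a Aa); exists q => //; apply/RlebP.
move=> q a b Aa Ab /RlebP qa /RlebP qb; case: (eqVneq a b) => // /eqP ab.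
have := A_sep a b Aa Ab ab; have := dist_triangle a q b; rewrite (dist_sym a q); lra.
Qed.

Lemma doubling_constant_ge2 (x y : T) : x <> y -> (2 <= lam)%N.
Proof.
move=> xy; have dxy := dist_gt0 xy.
have : (#|[set x; y]| <= lam ^ 2)%N.
  apply: (@card_separated_le 2 x (dist x y) (dist x y)) => //=; last by lra.
    by move=> a; rewrite !inE => /orP[]/eqP->; rewrite ?dist_xx; lra.
  move=> a b; rewrite !inE => /orP[]/eqP-> /orP[]/eqP-> ab //; rewrite ?(dist_sym y x);
    by [lra | case: ab].
rewrite cards2; move/eqP: xy => /negPf ->.
by case: lam => [|[|]].
Qed.

Variable d : R.
Hypothesis dim : d = ln (INR lam) / ln 2.

Lemma doubling_dim_gt0 : (2 <= lam)%N -> 0 < d.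
Proof.
move=> /leP/le_INR lam_ge2; simpl in lam_ge2.
have ln2 : 0 < ln 2 by rewrite -ln_1; apply: ln_increasing; lra.
rewrite dim; apply: Rdiv_lt_0_compat => //.
by rewrite -ln_1; apply: ln_increasing; lra.
Qed.

Lemma INR_expn_doubling k : (0 < lam)%N -> INR (lam ^ k) = Rpower (2 ^ k) d.
Proof.
move=> /ltP/lt_INR lam_gt0; simpl in lam_gt0.
have ln2 : 0 < ln 2 by rewrite -ln_1; apply: ln_increasing; lra.
rewrite INR_expn /Rpower ln_pow; last lra.
have -> : d * (INR k * ln 2) = INR k * ln (INR lam) by rewrite dim; field; lra.
by rewrite -/(Rpower _ _) Rpower_pow.
Qed.

Lemma separated_radius_ge (A : {set T}) p r del t :
  (2 <= lam)%N -> 0 < del -> {in A, forall a, dist p a <= r} ->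
  {in A &, forall a b, a <> b -> del <= dist a b} ->
  (1 <= t)%N -> Rpower (4 * INR t) d <= INR #|A| -> INR t * del <= r.
Proof.
move=> lam_ge2 del_gt0 A_ball A_sep /leP/le_INR t_ge1 A_large; simpl in t_ge1.
apply: Rnot_lt_le => r_small.
(* [r] may be [0], while the doubling cover needs a positive radius. *)
pose r' := Rmax r (INR t * del / 2).
have r'_gt0 : 0 < r' by apply: Rlt_le_trans (Rmax_r _ _); nra.
have r'_small : r' < INR t * del by apply: Rmax_lub_lt; nra.
have [k [k_lb k_ub]] := exists_pow2_gt (2 * r' / del).
have pow_k_gt0 : 0 < 2 ^ k by apply: pow_lt; lra.
have k_small : 2 ^ k < 4 * INR t.
  apply: Rle_lt_trans k_ub _; apply: Rmax_lub_lt; first lra.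
  by apply/(Rmult_lt_reg_r del) => //; rewrite /Rdiv; field_simplify; lra.
have : (#|A| <= lam ^ k)%N.
  apply: (@card_separated_le k p r' del) => //.
  - by move=> a Aa; apply: Rle_trans (A_ball a Aa) (Rmax_l _ _).
  - apply/(Rmult_lt_reg_r (2 ^ k)) => //; rewrite /Rdiv Rmult_assoc Rinv_l; last lra.
    by apply/(Rmult_lt_reg_r (2 / del)); [apply: Rdiv_lt_0_compat; lra | field_simplify; lra].
move=> /leP/le_INR; rewrite INR_expn_doubling; last by apply: leq_trans lam_ge2.
have : Rpower (2 ^ k) d < Rpower (4 * INR t) d.
  by apply: Rlt_Rpower_l; [exact: doubling_dim_gt0 | lra].
lra.
Qed.

Lemma closest_pair_split (S : {set T}) t p R0 x y :
  ~ (INR #|S| < 2 * Rpower (16 * exp 1) d) ->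
  INR t <= / (16 * exp 1) * Rpower (INR #|S| / 2) (/ d) < INR t + 1 ->
  SparseSepAnn_out dist d S #|S| t p R0 ->
  x \in S -> y \in S -> x <> y -> (forall a b, a <> b -> dist x y <= dist a b) ->
  let S1 := ball dist S p R0 in
  let S2 := annulus dist S p R0 ((1 + / INR t) * R0) in
  (x \in S1 :|: S2 /\ y \in S1 :|: S2) \/
  (x \in S2 :|: (S :\: (S1 :|: S2)) /\ y \in S2 :|: (S :\: (S1 :|: S2))).
Proof.
move=> /Rnot_lt_le S_large t_floor [R' [[_ [[R'_gt0 [ball_large _]] _]] [i [_ [_ R0_def]]]]].
move=> Sx Sy xy closest S1 S2.
have lam_ge2 := doubling_constant_ge2 xy.
have d_gt0 := doubling_dim_gt0 lam_ge2.
have t_ge1 := closest_pair_t_ge1 d_gt0 S_large t_floor.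
have t_gt0 : 0 < INR t by apply: (lt_INR 0); apply/ltP.
have tR' : INR t * dist x y <= R'.
  apply: (@separated_radius_ge (ball dist S p R') p) => //.
  - exact: dist_gt0.
  - by move=> a; rewrite inE => /andP[_ /RlebP].
  - by move=> a b _ _; apply: closest.
  - exact: Rle_trans (closest_pair_Rpower_4t_le d_gt0 S_large t_floor) ball_large.
have R'R0 : R' <= R0.
  rewrite R0_def; have : 1 <= (1 + / INR t) ^ i.-1.
    by apply: pow_R1_Rle; have := Rinv_0_lt_compat _ t_gt0; lra.
  nra.
have gap : dist x y <= (1 + / INR t) * R0 - R0.
  have -> : (1 + / INR t) * R0 - R0 = R0 / INR t by field; lra.
  by apply/(Rmult_le_reg_l (INR t)) => //; field_simplify; lra.
rewrite /S1 /S2 annulus_setU_outside ball_setU_annulus; last first.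
  by have := Rinv_0_lt_compat _ t_gt0; nra.
exact: ball_or_outside_pair.
Qed.

Lemma ClosestPair_out_eq (S : {set T}) (delta0 : Rbar) :
  ClosestPair_out dist d S delta0 -> delta dist S = delta dist [set: T] ->
  delta0 = delta dist [set: T].
Proof.
elim=> {S delta0} [// | S t p R0 d1 d2 S_large t_floor sparse out1 IH1 out2 IH2 dS].
have [sub1 sub2] := ClosestPair_parts_subset dist S p R0 ((1 + / INR t) * R0).
have le_part (A : {set T}) (dA : Rbar) : A \subset S -> ClosestPair_out dist d A dA ->
    Rbar_le (delta dist [set: T]) dA.
  move=> AS /ClosestPair_out_ge; apply: Rbar_le_trans.
  by rewrite -dS; apply: delta_le_subset.
apply: Rbar_min_eq; [exact: le_part out1 | exact: le_part out2 |].
have [dS_inf | [x [y [Sx Sy xy dS_xy]]]] := delta_attained dist S.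
  left; apply: IH1; apply: Rbar_le_antisym; last exact/delta_le_subset/subsetT.
  by rewrite -dS dS_inf; case: (delta dist _).
have dT_xy : delta dist [set: T] = dist x y by rewrite -dS.
have closest a b : a <> b -> dist x y <= dist a b.
  move=> /eqP ab; have := delta_le_dist dist (in_setT a) (in_setT b) ab.
  by rewrite dT_xy.
case: (closest_pair_split S_large t_floor sparse Sx Sy (elimN eqP xy) closest).
  by move=> [A1x A1y]; left; apply: IH1; apply: delta_pair_eq A1x A1y xy dT_xy.
by move=> [A2x A2y]; right; apply: IH2; apply: delta_pair_eq A2x A2y xy dT_xy.
Qed.

End Doubling.
End Metric.

Theorem lemma5 (T : finType) (dist : T -> T -> R) (d : R)
  (Hmetric : is_metric dist) (Hd : doubling_dimension dist d)
  (S : {set T}) (HS : (2 <= #|S|)%N) (delta0 : Rbar)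
  (Hout : ClosestPair_out dist d S delta0) :
  Rbar_le (delta dist [set: T]) delta0 /\
  (delta dist S = delta dist [set: T] -> delta0 = delta dist [set: T]).
Proof.
have [lam [[cover _] dim]] := Hd.
split; last exact: (ClosestPair_out_eq Hmetric cover dim Hout).
exact: Rbar_le_trans (delta_le_subset dist (subsetT S)) (ClosestPair_out_ge Hout).
Qed.
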